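(* Let $\epsilon>0$. There exist constants $K,c>0$ depending only on $\epsilon$ such that for every $n$ and every $\epsilon$-balanced random digraph $\Gamma(n)$ on $[n]$, \[\mathbb{P}\big(\Gamma(n)\text{ is not strongly connected}\big)\le K e^{-cn}.\]
   Context: Digraphs may have multiple edges (and loops). $\deg(i,j)\in\mathbb{Z}_{\ge0}$ is the number of edges from $i$ to $j$. A digraph is strongly connected if there is a directed path from every vertex to every other vertex. A random variable $y$ in a ring $T$ is $\epsilon$-balanced if for every maximal ideal $\mathfrak p$ of $T$ and every $r\in T/\mathfrak p$, $\mathbb{P}(y\equiv r\bmod\mathfrak p)\le1-\epsilon$. A random digraph on $[n]$ is $\epsilon$-balanced if the $\deg(i,j)$ for ordered pairs $i\ne j$ are independent $\epsilon$-balanced random variables in $\mathbb{Z}$. *)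

From Stdlib Require Import Reals ZArith Znumtheory List Classical ClassicalEpsilon.
Open Scope R_scope.

Definition Zrange (N : nat) : list Z :=
  map (fun k => (Z.of_nat k - Z.of_nat N)%Z) (seq 0 (2 * N + 1)).

Definition sumZ (N : nat) (f : Z -> R) : R :=
  fold_right Rplus 0 (map f (Zrange N)).

Definition indic (P : Prop) : R :=
  if excluded_middle_informative P then 1 else 0.

Definition is_pmf (f : Z -> R) : Prop :=
  (forall z, 0 <= f z) /\ Un_cv (fun N => sumZ N f) 1.

(* P(y in A) <= b for y with pmf f, where A : Z -> Prop.  Since the terms are
   nonnegative, this is equivalent to: every partial sum is <= b. *)
Definition probZ_le (f : Z -> R) (A : Z -> Prop) (b : R) : Prop :=
  forall N, sumZ N (fun z => f z * indic (A z)) <= b.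

(* eps-balanced random variable in Z: maximal ideals of Z are pZ, p prime;
   residues mod p are represented by r with 0 <= r < p. *)
Definition eps_balanced (eps : R) (f : Z -> R) : Prop :=
  forall p r : Z, prime p -> (0 <= r < p)%Z ->
    probZ_le f (fun z => Z.modulo z p = r) (1 - eps).

Definition offdiag_pairs (n : nat) : list (nat * nat) :=
  flat_map (fun i => flat_map (fun j => if Nat.eqb i j then nil else (i, j) :: nil)
                              (seq 0 n)) (seq 0 n).

(* A degree function: deg i j = number of edges from i to j. *)
Definition degfun := nat -> nat -> Z.

Definition upd (x : degfun) (i j : nat) (z : Z) : degfun :=
  fun a b => if andb (Nat.eqb a i) (Nat.eqb b j) then z else x a b.

Inductive reach (n : nat) (x : degfun) : nat -> nat -> Prop :=
| reach_refl : forall i, (i < n)%nat -> reach n x i i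
| reach_step : forall i k j, (i < n)%nat -> (k < n)%nat ->
    (1 <= x i k)%Z -> reach n x k j -> reach n x i j.

Definition strongly_connected (n : nat) (x : degfun) : Prop :=
  forall i j, (i < n)%nat -> (j < n)%nat -> reach n x i j.

(* Partial (boxed) expectation of F under the product measure of the
   independent pmfs mu i j, for (i,j) in ps, each coordinate in [-N, N]. *)
Fixpoint box_sum (mu : nat -> nat -> Z -> R) (N : nat) (ps : list (nat * nat))
         (F : degfun -> R) (x : degfun) : R :=
  match ps with
  | nil => F x
  | (i, j) :: ps' =>
      sumZ N (fun z => mu i j z * box_sum mu N ps' F (upd x i j z))
  end.

(* P(event) <= b for the random digraph whose off-diagonal degrees are
   independent with pmfs mu i j (loops, i.e. the diagonal, are set to 0;
   they do not affect strong connectivity).  P(event) is the supremum of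
   the boxed partial sums, so "<= b" means every partial sum is <= b. *)
Definition prob_digraph_le (n : nat) (mu : nat -> nat -> Z -> R)
           (E : degfun -> Prop) (b : R) : Prop :=
  forall N, box_sum mu N (offdiag_pairs n) (fun x => indic (E x)) (fun _ _ => 0%Z) <= b.

Definition eps_balanced_digraph (eps : R) (n : nat) (mu : nat -> nat -> Z -> R) : Prop :=
  forall i j, (i < n)%nat -> (j < n)%nat -> i <> j ->
    is_pmf (mu i j) /\ (forall z, (z < 0)%Z -> mu i j z = 0) /\ eps_balanced eps (mu i j).

From Stdlib Require Import Reals ZArith Znumtheory List Classical ClassicalEpsilon.
From Stdlib Require Import FunctionalExtensionality Lia Lra Permutation.
Open Scope R_scope.

(* If the digraph is not strongly connected, some ordered pair i <> j is joined by no
   path, in particular by no path i -> k -> j through any of the n - 2 other vertices.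
   These n - 2 events concern pairwise disjoint pairs of independent degrees.  Balance
   modulo 2 makes every degree positive with probability at least eps, so each two-step
   path is missing with probability at most 1 - eps^2, and a union bound over the
   n^2 pairs (i, j) gives n^2 (1 - eps^2)^(n - 2), which decays exponentially in n. *)

Definition lsum {A} (l : list A) (f : A -> R) : R := fold_right Rplus 0 (map f l).

Lemma lsum_ext {A} (l : list A) f g : (forall a, f a = g a) -> lsum l f = lsum l g.
Proof. intro H; induction l; unfold lsum in *; simpl; [|rewrite H, IHl]; auto. Qed.

Lemma lsum_le {A} (l : list A) f g :
  (forall a, In a l -> f a <= g a) -> lsum l f <= lsum l g.
Proof.
  intro H; induction l as [|a l IH]; unfold lsum in *; simpl; [lra|].
  pose proof (H a (or_introl eq_refl)). pose proof (IH (fun b Hb => H b (or_intror Hb))). lra.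
Qed.

Lemma lsum_nonneg {A} (l : list A) f : (forall a, 0 <= f a) -> 0 <= lsum l f.
Proof. intro H; induction l as [|a]; unfold lsum in *; simpl; [lra|]. specialize (H a); lra. Qed.

Lemma lsum_scal {A} (l : list A) c f : lsum l (fun a => c * f a) = c * lsum l f.
Proof. induction l; unfold lsum in *; simpl; [|rewrite IHl]; ring. Qed.

Lemma lsum_plus {A} (l : list A) f g : lsum l (fun a => f a + g a) = lsum l f + lsum l g.
Proof. induction l; unfold lsum in *; simpl; [|rewrite IHl]; ring. Qed.

Lemma lsum_zero {A} (l : list A) : lsum l (fun _ => 0) = 0.
Proof. induction l; unfold lsum in *; simpl; [|rewrite IHl]; ring. Qed.

Lemma lsum_const {A} (l : list A) c : lsum l (fun _ => c) = c * INR (length l).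
Proof.
  induction l; unfold lsum in *; simpl length; [simpl; ring|].
  rewrite S_INR; simpl; rewrite IHl; ring.
Qed.

Lemma lsum_swap {A B} (l1 : list A) (l2 : list B) f :
  lsum l1 (fun a => lsum l2 (fun b => f a b)) = lsum l2 (fun b => lsum l1 (fun a => f a b)).
Proof.
  induction l1 as [|a l1 IH].
  - symmetry; apply lsum_zero.
  - change (lsum l2 (fun b => f a b) + lsum l1 (fun a => lsum l2 (fun b => f a b)) =
            lsum l2 (fun b => f a b + lsum l1 (fun a => f a b))).
    rewrite IH, lsum_plus; reflexivity.
Qed.

Lemma lsum_in_le {A} (l : list A) f a : In a l -> (forall b, 0 <= f b) -> f a <= lsum l f.
Proof.
  intros Hin H; induction l as [|b l IH]; [contradiction|].
  unfold lsum in *; simpl in Hin |- *. pose proof (lsum_nonneg l f H). unfold lsum in *.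
  destruct Hin as [<-|Hin]; [lra|]. specialize (IH Hin); specialize (H b); lra.
Qed.

Lemma sumZ_ext N f g : (forall z, f z = g z) -> sumZ N f = sumZ N g.
Proof. apply lsum_ext. Qed.

Lemma sumZ_le N f g : (forall z, f z <= g z) -> sumZ N f <= sumZ N g.
Proof. intro H; apply lsum_le; auto. Qed.

Lemma sumZ_nonneg N f : (forall z, 0 <= f z) -> 0 <= sumZ N f.
Proof. apply lsum_nonneg. Qed.

Lemma sumZ_scal N c f : sumZ N (fun z => c * f z) = c * sumZ N f.
Proof. apply lsum_scal. Qed.

Lemma sumZ_swap N M f :
  sumZ N (fun a => sumZ M (fun b => f a b)) = sumZ M (fun b => sumZ N (fun a => f a b)).
Proof. apply lsum_swap. Qed.

Lemma sumZ_lsum_swap {A} N (l : list A) f :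
  sumZ N (fun z => lsum l (fun a => f z a)) = lsum l (fun a => sumZ N (fun z => f z a)).
Proof. apply lsum_swap. Qed.

Lemma Zrange_S N :
  Zrange (S N) = ((- Z.of_nat (S N))%Z :: Zrange N ++ (Z.of_nat (S N) :: nil))%list.
Proof.
  unfold Zrange. replace (2 * S N + 1)%nat with (S (S (2 * N + 1))) by lia.
  rewrite seq_S. simpl seq. simpl map. f_equal.
  rewrite map_app. simpl map. f_equal.
  - rewrite <- seq_shift, map_map. apply map_ext. intro k. lia.
  - f_equal. rewrite <- Pos2Z.add_pos_neg, <- Pos2Z.opp_pos, !Zpos_P_of_succ_nat. lia.
Qed.

Lemma sumZ_S N f : sumZ (S N) f = f (- Z.of_nat (S N))%Z + sumZ N f + f (Z.of_nat (S N)).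
Proof.
  unfold sumZ. rewrite Zrange_S. simpl. rewrite map_app, fold_right_app. simpl.
  assert (Hshift : forall c l, fold_right Rplus (c + 0) l = fold_right Rplus 0 l + c).
  { intros c l; induction l; simpl; [|rewrite IHl]; ring. }
  rewrite Hshift. simpl Z.of_nat. ring.
Qed.

Lemma sumZ_mono N M f : (forall z, 0 <= f z) -> (N <= M)%nat -> sumZ N f <= sumZ M f.
Proof.
  intros Hf HNM; induction HNM; [lra|]. rewrite sumZ_S.
  pose proof (Hf (- Z.of_nat (S m))%Z). pose proof (Hf (Z.of_nat (S m))). lra.
Qed.

(* Probabilities are suprema of boxed partial sums, so at a fixed box a pmf only has
   mass at most 1. *)
Definition subpmf (N : nat) (f : Z -> R) : Prop := (forall z, 0 <= f z) /\ sumZ N f <= 1.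

Lemma is_pmf_subpmf N f : is_pmf f -> subpmf N f.
Proof.
  intros [Hf Hcv]. split; auto.
  destruct (Rle_lt_dec (sumZ N f) 1) as [h|h]; auto. exfalso.
  destruct (Hcv (sumZ N f - 1)) as [N0 HN0]; [lra|].
  specialize (HN0 (max N N0) ltac:(lia)). unfold R_dist in HN0.
  pose proof (sumZ_mono N (max N N0) f Hf ltac:(lia)).
  pose proof (Rle_abs (sumZ (max N N0) f - 1)). lra.
Qed.

Lemma upd_comm x a b c d z w : (a <> c \/ b <> d) ->
  upd (upd x a b z) c d w = upd (upd x c d w) a b z.
Proof.
  intro H. extensionality u; extensionality v. unfold upd.
  destruct (Nat.eqb_spec u a), (Nat.eqb_spec v b), (Nat.eqb_spec u c), (Nat.eqb_spec v d);
    simpl; auto; lia.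
Qed.

Lemma upd_other x a b z u v : (u, v) <> (a, b) -> upd x a b z u v = x u v.
Proof.
  intro H. unfold upd. destruct (Nat.eqb_spec u a), (Nat.eqb_spec v b); simpl; auto.
  subst; contradiction.
Qed.

Section ProductMeasure.
Variables (mu : nat -> nat -> Z -> R) (N : nat).
Notation box := (box_sum mu N).

Definition subpmf_on (ps : list (nat * nat)) : Prop :=
  forall a b, In (a, b) ps -> subpmf N (mu a b).

Lemma subpmf_on_tl p ps : subpmf_on (p :: ps) -> subpmf_on ps.
Proof. intros H a b Hin; apply H; simpl; auto. Qed.

Lemma box_swap a b c d ps F x :
  box ((a, b) :: (c, d) :: ps) F x = box ((c, d) :: (a, b) :: ps) F x.
Proof.
  destruct (classic (a = c /\ b = d)) as [[<- <-]|Hne]; [reflexivity|]. simpl.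
  transitivity (sumZ N (fun z => sumZ N (fun w =>
    mu c d w * (mu a b z * box ps F (upd (upd x c d w) a b z))))).
  - apply sumZ_ext; intro z. rewrite <- sumZ_scal. apply sumZ_ext; intro w.
    rewrite upd_comm by lia. ring.
  - rewrite sumZ_swap. apply sumZ_ext; intro w. rewrite <- sumZ_scal. reflexivity.
Qed.

Lemma box_perm ps ps' : Permutation ps ps' -> forall F x, box ps F x = box ps' F x.
Proof.
  induction 1 as [| [a b] ps ps' _ IH | [a b] [c d] ps | ps ps' ps'' _ IH1 _ IH2];
    intros F x.
  - reflexivity.
  - simpl. apply sumZ_ext; intro z. rewrite IH; auto.
  - apply box_swap.
  - rewrite IH1, IH2; auto.
Qed.

Lemma box_mono ps F G x : subpmf_on ps -> (forall y, F y <= G y) -> box ps F x <= box ps G x.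
Proof.
  revert x; induction ps as [|[a b] ps IH]; intros x Hps H; simpl; auto.
  apply sumZ_le; intro z. apply Rmult_le_compat_l.
  - apply (Hps a b); simpl; auto.
  - apply IH; auto. eapply subpmf_on_tl; eauto.
Qed.

Lemma box_const_le ps c x : subpmf_on ps -> 0 <= c -> box ps (fun _ => c) x <= c.
Proof.
  revert x; induction ps as [|[a b] ps IH]; intros x Hps Hc; simpl; [lra|].
  destruct (Hps a b) as [Hnn Hmass]; [simpl; auto|].
  apply Rle_trans with (sumZ N (fun z => c * mu a b z)).
  - apply sumZ_le; intro z. rewrite Rmult_comm. apply Rmult_le_compat_r; auto.
    apply IH; auto. eapply subpmf_on_tl; eauto.
  - rewrite sumZ_scal. pose proof (Rmult_le_compat_l c _ _ Hc Hmass). lra.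
Qed.

Lemma box_frame ps (g H : degfun -> R) x :
  (forall a b, In (a, b) ps -> forall y z, g (upd y a b z) = g y) ->
  box ps (fun y => g y * H y) x = g x * box ps H x.
Proof.
  revert x; induction ps as [|[a b] ps IH]; intros x Hg; simpl; auto.
  rewrite <- sumZ_scal. apply sumZ_ext; intro z.
  rewrite IH by (intros; apply Hg; simpl; auto). rewrite Hg by (simpl; auto). ring.
Qed.

Lemma box_lsum {A} ps (l : list A) (G : A -> degfun -> R) x :
  box ps (fun y => lsum l (fun t => G t y)) x = lsum l (fun t => box ps (G t) x).
Proof.
  revert x; induction ps as [|[a b] ps IH]; intros x; simpl; auto.
  rewrite <- sumZ_lsum_swap. apply sumZ_ext; intro z. rewrite IH, <- lsum_scal. reflexivity.
Qed.

End ProductMeasure.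

Lemma indic_bounds P : 0 <= indic P <= 1.
Proof. unfold indic; destruct (excluded_middle_informative P); lra. Qed.

Lemma indic_or P Q : indic (P \/ Q) = indic P + indic Q - indic P * indic Q.
Proof.
  unfold indic. destruct (excluded_middle_informative (P \/ Q)), (excluded_middle_informative P),
    (excluded_middle_informative Q); try lra; tauto.
Qed.

Lemma sumZ_indic_or N f g (P Q : Z -> Prop) :
  let A := sumZ N (fun z => f z * indic (P z)) in
  let B := sumZ N (fun w => g w * indic (Q w)) in
  sumZ N (fun z => f z * sumZ N (fun w => g w * indic (P z \/ Q w))) =
  A * sumZ N g + sumZ N f * B - A * B.
Proof.
  intros A B. unfold A, B, sumZ; generalize (Zrange N) as l; intro l.
  assert (Hinner : forall z, lsum l (fun w => g w * indic (P z \/ Q w)) =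
    indic (P z) * lsum l g + lsum l (fun w => g w * indic (Q w))
    - indic (P z) * lsum l (fun w => g w * indic (Q w))).
  { intro z. induction l; unfold lsum in *; simpl; [ring|]. rewrite IHl, indic_or; ring. }
  change (lsum l (fun z => f z * lsum l (fun w => g w * indic (P z \/ Q w))) =
    lsum l (fun z => f z * indic (P z)) * lsum l g
    + lsum l f * lsum l (fun w => g w * indic (Q w))
    - lsum l (fun z => f z * indic (P z)) * lsum l (fun w => g w * indic (Q w))).
  rewrite (lsum_ext l _ (fun z => f z * (indic (P z) * lsum l g
    + lsum l (fun w => g w * indic (Q w)) - indic (P z) * lsum l (fun w => g w * indic (Q w)))))
    by (intro z; rewrite Hinner; reflexivity).
  clear Hinner. generalize (lsum l g) (lsum l (fun w => g w * indic (Q w))); intros m b.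
  induction l; unfold lsum in *; simpl; [ring|]. rewrite IHl; ring.
Qed.

Definition no_edge_mass (N : nat) (f : Z -> R) : R := sumZ N (fun z => f z * indic (z < 1)%Z).

Definition edge_likely (N : nat) (e : R) (f : Z -> R) : Prop :=
  subpmf N f /\ no_edge_mass N f <= 1 - e.

Lemma no_edge_mass_nonneg N f : subpmf N f -> 0 <= no_edge_mass N f.
Proof.
  intros [Hnn _]. apply sumZ_nonneg; intro z.
  apply Rmult_le_pos; [apply Hnn | apply indic_bounds].
Qed.

Lemma two_edges_absent_mass N e f g : 0 <= e -> edge_likely N e f -> edge_likely N e g ->
  sumZ N (fun z => f z * sumZ N (fun w => g w * indic ((z < 1)%Z \/ (w < 1)%Z))) <= 1 - e ^ 2.
Proof.
  intros He [Hf Haf] [Hg Hbg].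
  rewrite (sumZ_indic_or N f g (fun z => (z < 1)%Z) (fun w => (w < 1)%Z)).
  fold (no_edge_mass N f) (no_edge_mass N g).
  pose proof (no_edge_mass_nonneg N f Hf). pose proof (no_edge_mass_nonneg N g Hg).
  destruct Hf as [_ Hmf], Hg as [_ Hmg].
  assert (no_edge_mass N f * sumZ N g <= no_edge_mass N f) by nra.
  assert (sumZ N f * no_edge_mass N g <= no_edge_mass N g) by nra.
  assert ((1 - no_edge_mass N f) * (1 - no_edge_mass N g) >= e * e) by nra.
  simpl; nra.
Qed.

Section TwoStepPaths.
Variables (mu : nat -> nat -> Z -> R) (N : nat) (i j : nat) (e : R).
Notation box := (box_sum mu N).

Definition no_path_via (k : nat) (y : degfun) : R := indic ((y i k < 1)%Z \/ (y k j < 1)%Z).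

Definition no_path_via_all (ks : list nat) (y : degfun) : R :=
  fold_right Rmult 1 (map (fun k => no_path_via k y) ks).

Definition pairs_via (ks : list nat) : list (nat * nat) :=
  flat_map (fun k => (i, k) :: (k, j) :: nil) ks.

Lemma no_path_via_all_nonneg ks y : 0 <= no_path_via_all ks y.
Proof.
  induction ks; unfold no_path_via_all in *; simpl; [lra|].
  apply Rmult_le_pos; [apply indic_bounds | exact IHks].
Qed.

Lemma no_path_via_upd2 k x z w : k <> i ->
  no_path_via k (upd (upd x i k z) k j w) = indic ((z < 1)%Z \/ (w < 1)%Z).
Proof.
  intro Hki. unfold no_path_via, upd. rewrite !Nat.eqb_refl.
  destruct (Nat.eqb_spec i k); [congruence|]. reflexivity.
Qed.

Lemma no_path_via_upd_other k a b y z : (a, b) <> (i, k) -> (a, b) <> (k, j) ->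
  no_path_via k (upd y a b z) = no_path_via k y.
Proof.
  intros H1 H2. unfold no_path_via. rewrite !upd_other by congruence. reflexivity.
Qed.

Lemma box_no_path_via_le k ps G Q x :
  k <> i -> ~ In (i, k) ps -> ~ In (k, j) ps -> 0 <= e -> 0 <= Q ->
  edge_likely N e (mu i k) -> edge_likely N e (mu k j) ->
  (forall y, box ps G y <= Q) ->
  box ((i, k) :: (k, j) :: ps) (fun y => no_path_via k y * G y) x <= (1 - e ^ 2) * Q.
Proof.
  intros Hki Hik Hkj He HQ [[Hik_nn Hik_mass] Hik_edge] [[Hkj_nn Hkj_mass] Hkj_edge] HG.
  simpl. apply Rle_trans with
    (sumZ N (fun z => mu i k z * sumZ N (fun w => mu k j w * (indic ((z < 1)%Z \/ (w < 1)%Z) * Q)))).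
  - apply sumZ_le; intro z; apply Rmult_le_compat_l; [apply Hik_nn|].
    apply sumZ_le; intro w; apply Rmult_le_compat_l; [apply Hkj_nn|].
    rewrite box_frame.
    + rewrite no_path_via_upd2 by exact Hki.
      apply Rmult_le_compat_l; [apply indic_bounds | apply HG].
    + intros a b Hab y z'. apply no_path_via_upd_other; intros [= -> ->]; contradiction.
  - rewrite (sumZ_ext N _ (fun z =>
      Q * (mu i k z * sumZ N (fun w => mu k j w * indic ((z < 1)%Z \/ (w < 1)%Z))))).
    + rewrite sumZ_scal, Rmult_comm. apply Rmult_le_compat_r; [exact HQ|].
      apply two_edges_absent_mass; repeat split; auto.
    + intro z. rewrite <- sumZ_scal, <- sumZ_scal, <- sumZ_scal. apply sumZ_ext; intro w. ring.
Qed.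

Lemma box_no_path_via_all_le ks rest x :
  0 <= e <= 1 -> (forall k, In k ks -> k <> i) ->
  (forall a b, In (a, b) (pairs_via ks ++ rest) -> edge_likely N e (mu a b)) ->
  NoDup (pairs_via ks ++ rest) ->
  box (pairs_via ks ++ rest) (no_path_via_all ks) x <= (1 - e ^ 2) ^ length ks.
Proof.
  intro He. revert x. induction ks as [|k ks IH]; intros x Hks Hlaw Hnd.
  - apply (box_const_le mu N rest 1); [|lra]. intros a b Hab; apply Hlaw; auto.
  - simpl in Hlaw, Hnd |- *. inversion Hnd as [|? ? Hnik Hnd1]; subst.
    inversion Hnd1 as [|? ? Hnkj Hnd2]; subst.
    apply box_no_path_via_le; auto; try lra.
    + apply Hks; simpl; auto.
    + intro; apply Hnik; simpl; auto.
    + apply pow_le; nra.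
    + intro y. apply IH; auto. intros; apply Hks; simpl; auto.
Qed.

End TwoStepPaths.

Lemma NoDup_flat_map {A B} (f : A -> list B) l :
  NoDup l -> (forall a, In a l -> NoDup (f a)) ->
  (forall a a' b, In a l -> In a' l -> In b (f a) -> In b (f a') -> a = a') ->
  NoDup (flat_map f l).
Proof.
  induction l as [|a l IH]; intros Hnd Hf Hd; simpl; [constructor|].
  inversion Hnd; subst. apply NoDup_app.
  - apply Hf; simpl; auto.
  - apply IH; auto; intros; [apply Hf | eapply Hd]; simpl; eauto.
  - intros b Hb Hb'. apply in_flat_map in Hb'. destruct Hb' as [a' [Ha' Hb']].
    assert (a = a') by (eapply Hd; simpl; eauto). subst; contradiction.
Qed.

Lemma length_flat_map_le {A B} (f : A -> list B) l m :
  (forall a, (length (f a) <= m)%nat) -> (length (flat_map f l) <= length l * m)%nat.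
Proof. intro H; induction l; simpl; [lia|]. rewrite length_app. specialize (H a). lia. Qed.

Lemma In_offdiag n a b : In (a, b) (offdiag_pairs n) <-> (a < n)%nat /\ (b < n)%nat /\ a <> b.
Proof.
  unfold offdiag_pairs. rewrite in_flat_map. split.
  - intros [i [Hi Hin]]. rewrite in_flat_map in Hin. destruct Hin as [j [Hj Hin]].
    apply in_seq in Hi, Hj. destruct (Nat.eqb_spec i j); simpl in Hin; [contradiction|].
    destruct Hin as [[= <- <-]|[]]. lia.
  - intros [Ha [Hb Hab]]. exists a; split; [apply in_seq; lia|].
    rewrite in_flat_map. exists b; split; [apply in_seq; lia|].
    destruct (Nat.eqb_spec a b); [contradiction | simpl; auto].
Qed.

Lemma NoDup_offdiag n : NoDup (offdiag_pairs n).
Proof.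
  assert (Hcell : forall i j p, In p (if Nat.eqb i j then nil else (i, j) :: nil) -> p = (i, j)).
  { intros i j p. destruct (Nat.eqb i j); simpl; [tauto | intros [<-|[]]; auto]. }
  apply NoDup_flat_map; [apply seq_NoDup | intros i _ | intros i i' p _ _ Hp Hp'].
  - apply NoDup_flat_map; [apply seq_NoDup | intros j _ | intros j j' p _ _ Hp Hp'].
    + destruct (Nat.eqb i j); repeat constructor; simpl; tauto.
    + apply Hcell in Hp, Hp'. congruence.
  - apply in_flat_map in Hp, Hp'. destruct Hp as [j [_ Hp]], Hp' as [j' [_ Hp']].
    apply Hcell in Hp, Hp'. congruence.
Qed.

Lemma length_offdiag n : (length (offdiag_pairs n) <= n * n)%nat.
Proof.
  unfold offdiag_pairs. eapply Nat.le_trans; [apply length_flat_map_le with (m := n)|].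
  - intro i. eapply Nat.le_trans; [apply length_flat_map_le with (m := 1%nat)|].
    + intro j. destruct (Nat.eqb i j); simpl; lia.
    + rewrite length_seq. lia.
  - rewrite length_seq. lia.
Qed.

Definition others (n i j : nat) : list nat :=
  filter (fun k => andb (negb (Nat.eqb k i)) (negb (Nat.eqb k j))) (seq 0 n).

Lemma In_others n i j k : In k (others n i j) <-> (k < n)%nat /\ k <> i /\ k <> j.
Proof.
  unfold others. rewrite filter_In, in_seq, Bool.andb_true_iff, !Bool.negb_true_iff,
    !Nat.eqb_neq. lia.
Qed.

Lemma length_others n i j : (n - 2 <= length (others n i j))%nat.
Proof.
  unfold others. set (p k := andb (negb (Nat.eqb k i)) (negb (Nat.eqb k j))).
  pose proof (filter_length p (seq 0 n)) as Hsplit. rewrite length_seq in Hsplit.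
  enough (length (filter (fun k => negb (p k)) (seq 0 n)) <= length (i :: j :: nil))%nat
    by (simpl in *; lia).
  apply NoDup_incl_length; [apply NoDup_filter, seq_NoDup|].
  intros k Hk. apply filter_In in Hk. destruct Hk as [_ Hk]. unfold p in Hk.
  destruct (Nat.eqb_spec k i), (Nat.eqb_spec k j); simpl in *; auto; discriminate.
Qed.

Lemma NoDup_pairs_via i j ks : NoDup ks -> (forall k, In k ks -> k <> i /\ k <> j) ->
  NoDup (pairs_via i j ks).
Proof.
  intros Hnd Hk. unfold pairs_via. apply NoDup_flat_map; auto.
  - intros k Hin. destruct (Hk k Hin).
    repeat constructor; simpl; intuition congruence.
  - intros k k' p Hin Hin' H1 H2. destruct (Hk k Hin), (Hk k' Hin').
    simpl in H1, H2. destruct H1 as [<-|[<-|[]]]; destruct H2 as [H2|[H2|[]]];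
      injection H2; intros; subst; lia.
Qed.

Lemma offdiag_pairs_split n i j : (i < n)%nat -> (j < n)%nat -> i <> j ->
  exists rest, Permutation (offdiag_pairs n) (pairs_via i j (others n i j) ++ rest).
Proof.
  intros Hi Hj Hij.
  assert (pair_eq_dec : forall p q : nat * nat, {p = q} + {p <> q})
    by (decide equality; apply Nat.eq_dec).
  set (bl := pairs_via i j (others n i j)).
  exists (filter (fun p => if in_dec pair_eq_dec p bl then false else true) (offdiag_pairs n)).
  apply NoDup_Permutation; [apply NoDup_offdiag| |].
  - apply NoDup_app.
    + apply NoDup_pairs_via; [apply NoDup_filter, seq_NoDup|].
      intros k Hk. apply In_others in Hk. lia.
    + apply NoDup_filter, NoDup_offdiag.
    + intros p Hp Hp'. apply filter_In in Hp'. destruct Hp' as [_ Hp'].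
      destruct (in_dec pair_eq_dec p bl); [discriminate | contradiction].
  - intros [a b]. rewrite in_app_iff, filter_In. split.
    + intro H. destruct (in_dec pair_eq_dec (a, b) bl); auto.
    + intros [H|[H _]]; auto. apply in_flat_map in H.
      destruct H as [k [Hk H]]. apply In_others in Hk. apply In_offdiag.
      destruct H as [[= <- <-]|[[= <- <-]|[]]]; lia.
Qed.

Lemma no_path_via_all_one i j ks y :
  (forall k, In k ks -> no_path_via i j k y = 1) -> no_path_via_all i j ks y = 1.
Proof.
  induction ks; intro H; unfold no_path_via_all in *; simpl; auto.
  rewrite H by (simpl; auto). rewrite IHks; [ring|]. intros; apply H; simpl; auto.
Qed.

Lemma indic_not_strongly_connected_le n y :
  indic (~ strongly_connected n y) <=
  lsum (offdiag_pairs n) (fun p => no_path_via_all (fst p) (snd p) (others n (fst p) (snd p)) y).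
Proof.
  unfold indic at 1. destruct (excluded_middle_informative _) as [Hns|_].
  2: { apply lsum_nonneg. intros; apply no_path_via_all_nonneg. }
  assert (Hex : exists i j, (i < n)%nat /\ (j < n)%nat /\ ~ reach n y i j).
  { apply NNPP; intro C; apply Hns; intros i j Hi Hj; apply NNPP; intro Hr; apply C; eauto. }
  destruct Hex as [i [j [Hi [Hj Hr]]]].
  assert (Hij : i <> j) by (intros ->; apply Hr; constructor; auto).
  apply Rle_trans with (no_path_via_all i j (others n i j) y).
  - right. symmetry. apply no_path_via_all_one. intros k Hk. apply In_others in Hk.
    unfold no_path_via, indic. destruct (excluded_middle_informative _) as [_|Hpath]; auto.
    exfalso. apply Hr. apply reach_step with k; [lia | lia | lia |].
    apply reach_step with j; [lia | lia | lia | constructor; auto].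
  - apply (lsum_in_le _ (fun p => no_path_via_all (fst p) (snd p) (others n (fst p) (snd p)) y)
      (i, j)); [apply In_offdiag; auto|].
    intros; apply no_path_via_all_nonneg.
Qed.

Lemma pow_decr_le q m k : 0 <= q <= 1 -> (m <= k)%nat -> q ^ k <= q ^ m.
Proof.
  intros Hq Hmk. replace k with (m + (k - m))%nat by lia. rewrite pow_add.
  assert (q ^ (k - m) <= 1) by (rewrite <- (pow1 (k - m)); apply pow_incr; lra).
  assert (0 <= q ^ m) by (apply pow_le; lra). nra.
Qed.

Lemma box_not_strongly_connected_le n mu N e : 0 <= e <= 1 ->
  (forall a b, In (a, b) (offdiag_pairs n) -> edge_likely N e (mu a b)) ->
  box_sum mu N (offdiag_pairs n) (fun y => indic (~ strongly_connected n y)) (fun _ _ => 0%Z)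
  <= INR n * INR n * (1 - e ^ 2) ^ (n - 2).
Proof.
  intros He Hlaw. set (q := 1 - e ^ 2). assert (Hq : 0 <= q <= 1) by (unfold q; nra).
  eapply Rle_trans.
  { apply box_mono; [intros a b Hab; apply Hlaw; auto | apply indic_not_strongly_connected_le]. }
  rewrite box_lsum. apply Rle_trans with (lsum (offdiag_pairs n) (fun _ => q ^ (n - 2))).
  - apply lsum_le. intros [i j] Hij. simpl. apply In_offdiag in Hij as [Hi [Hj Hne]].
    destruct (offdiag_pairs_split n i j Hi Hj Hne) as [rest Hperm].
    rewrite (box_perm _ _ _ _ Hperm). eapply Rle_trans.
    + apply box_no_path_via_all_le; [exact He | | | ].
      * intros k Hk. apply In_others in Hk. lia.
      * intros a b Hab. apply Hlaw. apply Permutation_in with (1 := Permutation_sym Hperm), Hab.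
      * apply (Permutation_NoDup Hperm), NoDup_offdiag.
    + apply pow_decr_le; [exact Hq | apply length_others].
  - rewrite lsum_const.
    assert (INR (length (offdiag_pairs n)) <= INR n * INR n)
      by (rewrite <- mult_INR; apply le_INR, length_offdiag).
    assert (0 <= q ^ (n - 2)) by (apply pow_le; lra). nra.
Qed.

Lemma indic_true (P : Prop) : P -> indic P = 1.
Proof. unfold indic; destruct (excluded_middle_informative P); tauto. Qed.

Lemma indic_false (P : Prop) : ~ P -> indic P = 0.
Proof. unfold indic; destruct (excluded_middle_informative P); tauto. Qed.

Lemma balanced_no_edge_mass eps f N : is_pmf f -> (forall z, (z < 0)%Z -> f z = 0) ->
  eps_balanced eps f -> no_edge_mass N f <= 1 - eps.
Proof.
  intros [Hnn _] Hneg Hbal. eapply Rle_trans; [|exact (Hbal 2%Z 0%Z prime_2 ltac:(lia) N)].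
  apply sumZ_le; intro z. destruct (Z.lt_trichotomy z 0) as [Hz|[->|Hz]].
  - rewrite Hneg by exact Hz. lra.
  - rewrite !indic_true by reflexivity || lia. lra.
  - rewrite (indic_false (z < 1)%Z) by lia.
    pose proof (indic_bounds (Z.modulo z 2 = 0)%Z). pose proof (Hnn z). nra.
Qed.

Lemma balanced_digraph_edge_likely eps e n mu N : e <= eps ->
  eps_balanced_digraph eps n mu ->
  forall a b, In (a, b) (offdiag_pairs n) -> edge_likely N e (mu a b).
Proof.
  intros Hee Hmu a b Hab. apply In_offdiag in Hab as [Ha [Hb Hne]].
  destruct (Hmu a b Ha Hb Hne) as [Hpmf [Hneg Hbal]].
  split; [apply is_pmf_subpmf, Hpmf|].
  pose proof (balanced_no_edge_mass eps (mu a b) N Hpmf Hneg Hbal). lra.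
Qed.

Lemma le_exp_scaled x c : 0 < c -> x <= 4 / c * exp (c * x / 4).
Proof.
  intro Hc. pose proof (exp_ineq1_le (c * x / 4)).
  replace x with (4 / c * (c * x / 4)) at 1 by (field; lra).
  apply Rmult_le_compat_l; [apply Rlt_le, Rdiv_lt_0_compat|]; lra.
Qed.

Lemma pow_sub2_le q n : 0 < q <= 1 -> q ^ (n - 2) <= q ^ n / q ^ 2.
Proof.
  intro Hq. assert (Hq2 : 0 < q ^ 2) by (apply pow_lt; lra).
  apply Rmult_le_reg_r with (q ^ 2); [exact Hq2|].
  unfold Rdiv. rewrite Rmult_assoc, Rinv_l, Rmult_1_r by lra.
  rewrite <- pow_add. apply pow_decr_le; [lra | lia].
Qed.

Lemma ln_lt_0 q : 0 < q < 1 -> ln q < 0.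
Proof. intro Hq. rewrite <- ln_1. apply ln_increasing; lra. Qed.

Lemma sq_mul_pow_le_exp q n : 0 < q < 1 ->
  INR n * INR n * q ^ (n - 2) <= 16 / (q ^ 2 * ln q ^ 2) * exp (ln q / 2 * INR n).
Proof.
  intro Hq. set (c := - ln q).
  assert (Hc : 0 < c) by (unfold c; pose proof (ln_lt_0 q Hq); lra).
  set (E := exp (c * INR n / 4)).
  assert (Hn : INR n <= 4 / c * E) by (apply le_exp_scaled, Hc).
  assert (Hqn : q ^ n = exp (- c * INR n))
    by (rewrite <- Rpower_pow by lra; unfold Rpower, c; f_equal; ring).
  assert (HE : E * E * exp (- c * INR n) = exp (ln q / 2 * INR n))
    by (unfold E; rewrite <- !exp_plus; f_equal; unfold c; field).
  pose proof (pow_sub2_le q n ltac:(lra)) as Hsub. rewrite Hqn in Hsub.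
  pose proof (pos_INR n). pose proof (pow_le q (n - 2) ltac:(lra)).
  apply Rle_trans with (4 / c * E * (4 / c * E) * (exp (- c * INR n) / q ^ 2)).
  - apply Rmult_le_compat; auto; [apply Rmult_le_pos; auto | apply Rmult_le_compat; auto].
  - right. replace (ln q ^ 2) with (c ^ 2) by (unfold c; ring). rewrite <- HE.
    field. split; lra.
Qed.

Theorem mainTheorem8 (eps : R) (Heps : 0 < eps) :
  exists K c : R, 0 < K /\ 0 < c /\
    forall (n : nat) (mu : nat -> nat -> Z -> R),
      eps_balanced_digraph eps n mu ->
      prob_digraph_le n mu (fun x => ~ strongly_connected n x)
                      (K * exp (- c * INR n)).
Proof.
  set (e := Rmin eps (1 / 2)).
  assert (He : 0 < e <= 1 / 2) by (unfold e, Rmin; destruct (Rle_dec eps (1 / 2)); lra).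
  set (q := 1 - e ^ 2). assert (Hq : 0 < q < 1) by (unfold q; nra).
  pose proof (ln_lt_0 q Hq).
  exists (16 / (q ^ 2 * ln q ^ 2)), (- ln q / 2). split; [|split; [lra|]].
  { apply Rdiv_lt_0_compat; [lra|]. apply Rmult_lt_0_compat; [apply pow_lt|]; nra. }
  intros n mu Hmu N. eapply Rle_trans.
  - apply box_not_strongly_connected_le with (e := e); [lra|].
    apply balanced_digraph_edge_likely with eps; [apply Rmin_l | exact Hmu].
  - replace (- (- ln q / 2)) with (ln q / 2) by lra. apply sq_mul_pow_le_exp, Hq.
Qed.
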